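(* Let $\alpha$ and $\beta$ be ribbons such that $[\alpha]=[\beta]$. Then $\beta=\alpha_\pi$ for some permutation $\pi$; that is, $\alpha$ and $\beta$ have the same number $m$ of rows, and the sequence of row lengths of $\beta$ is a rearrangement of the sequence of row lengths of $\alpha$.
   Context: A ribbon is a connected skew shape (in English notation) containing no $2\times 2$ block of boxes. A composition $\alpha=(\alpha_1,\dots,\alpha_m)$ determines the unique ribbon with $m$ rows whose $i$-th row from the top has $\alpha_i$ boxes; consecutive rows $i$ and $i+1$ share exactly one column, the leftmost box of row $i$ lying directly above the rightmost box of row $i+1$. For $\pi\in S_m$, $\alpha_\pi=(\alpha_{\pi^{-1}(1)},\dots,\alpha_{\pi^{-1}(m)})$. For a skew shape $\lambda/\mu$, write $s_{\lambda/\mu}=\sum_\nu c^{\lambda}_{\mu,\nu}s_\nu$ (expansion in Schur functions $s_\nu$ over partitions $\nu$); the Schur support is $[\lambda/\mu]=\{\nu : c^\lambda_{\mu,\nu}>0\}$. (The proof may use McNamara's theorem that two skew shapes with equal Schur support contain the same number of $k\times\ell$ rectangles as subdiagrams for all $k,\ell\ge 1$.) *)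

From mathcomp Require Import all_boot.
Set Implicit Arguments. Unset Strict Implicit. Unset Printing Implicit Defensive.

Definition is_partition (nu : seq nat) : Prop :=
  all (fun x => 0 < x) nu /\ sorted geq nu.

Definition is_composition (a : seq nat) : Prop := all (fun x => 0 < x) a.

(* Skew shape lam/mu in English notation, rows and columns 0-indexed:
   cell (i,j) belongs to lam/mu iff nth 0 mu i <= j < nth 0 lam i. *)
Definition in_skew (lam mu : seq nat) (i j : nat) : bool :=
  (nth 0 mu i <= j) && (j < nth 0 lam i).

Definition reading_word (lam mu : seq nat) (T : nat -> nat -> nat) : seq nat :=
  flatten [seq [seq T i j | j <- rev (iota (nth 0 mu i) (nth 0 lam i - nth 0 mu i))]
          | i <- iota 0 (size lam)].

(* Littlewood-Richardson tableau of shape lam/mu and content nu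
   (letters are 0-indexed: letter k stands for k+1). *)
Definition LR_tableau (lam mu nu : seq nat) (T : nat -> nat -> nat) : Prop :=
  (forall i j, in_skew lam mu i j -> in_skew lam mu i j.+1 -> T i j <= T i j.+1) /\
  (forall i j, in_skew lam mu i j -> in_skew lam mu i.+1 j -> T i j < T i.+1 j) /\
  (forall k, count_mem k (reading_word lam mu T) = nth 0 nu k) /\
  (forall n k, count_mem k.+1 (take n (reading_word lam mu T))
               <= count_mem k (take n (reading_word lam mu T))).

(* Schur support [lam/mu] = { nu : c^lam_{mu,nu} > 0 }, where by the
   Littlewood-Richardson rule c^lam_{mu,nu} is the number of LR tableaux of
   shape lam/mu and content nu. *)
Definition schur_support (lam mu nu : seq nat) : Prop :=
  is_partition nu /\ exists T, LR_tableau lam mu nu T.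

(* The ribbon of a composition a = (a_1,...,a_m): row i (from the top) has a_i
   boxes, and the leftmost box of row i lies above the rightmost box of row i+1.
   Bottom row starts at column 0; row i starts at column sum_{k>i} (a_k - 1). *)
Definition ribbon_outer (a : seq nat) : seq nat :=
  [seq (sumn (map predn (drop i a))).+1 | i <- iota 0 (size a)].
Definition ribbon_inner (a : seq nat) : seq nat :=
  [seq sumn (map predn (drop i.+1 a)) | i <- iota 0 (size a)].

Definition ribbon_support (a : seq nat) (nu : seq nat) : Prop :=
  schur_support (ribbon_outer a) (ribbon_inner a) nu.

From mathcomp Require Import all_boot zify.

Set Implicit Arguments.
Unset Strict Implicit.
Unset Printing Implicit Defensive.

(* Write [excess s t] for the sum of the positive parts (x - t)_+ over the
   entries x of s; a sequence of positive integers is determined up to order by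
   the function [excess s].  In an LR tableau every row of the reading word is
   weakly decreasing, and the lattice condition forces the k-th letter of a row
   (counting from 0) to have occurred at least k times before it; hence the
   row lengths r of any skew shape with nu in its Schur support satisfy
   excess r t <= excess nu t.  The row lengths of the ribbon of alpha are
   alpha, and the decreasing rearrangement of alpha lies in [alpha].  So
   [alpha] = [beta] gives excess alpha = excess beta. *)

Definition excess (s : seq nat) (t : nat) : nat := sumn [seq x - t | x <- s].

Lemma excessS s t : excess s t = excess s t.+1 + count (fun x => t < x) s.
Proof.
by elim: s => //= x s IHs; rewrite /excess /= -!/(excess _ _) IHs; case: ltnP; lia.
Qed.

Lemma excess_rcons s x t : excess (rcons s x) t = excess s t + (x - t).
Proof. by rewrite /excess map_rcons sumn_rcons. Qed.

Lemma perm_excess s1 s2 t : perm_eq s1 s2 -> excess s1 t = excess s2 t.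
Proof. by move=> eq_s; apply/perm_sumn/perm_map. Qed.

Lemma excess_sort (leT : rel nat) s t : excess (sort leT s) t = excess s t.
Proof. by apply: perm_excess; rewrite perm_sort. Qed.

Lemma excess_incr_nth s i t :
  i < size s -> excess (incr_nth s i) t = excess s t + (t <= nth 0 s i).
Proof.
elim: s i => [|x s IHs] [|i] //= lt_i_s; rewrite /excess /= -!/(excess _ _).
  by case: leqP; lia.
by rewrite IHs // addnA.
Qed.

Lemma excess_inj s1 s2 :
  all (fun x => 0 < x) s1 -> all (fun x => 0 < x) s2 ->
  (forall t, excess s1 t = excess s2 t) -> perm_eq s1 s2.
Proof.
move=> pos1 pos2 eq_exc.
have count_gt t : count (fun x => t < x) s1 = count (fun x => t < x) s2.
  by have := eq_exc t; rewrite (excessS s1) (excessS s2) eq_exc; lia.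
have count0 s : all (fun x => 0 < x) s -> count_mem 0 s = 0.
  by move=> pos; apply/count_memPn/negP => /(allP pos).
have count_gtS x s :
    count (fun y => x < y) s = count_mem x.+1 s + count (fun y => x.+1 < y) s.
  elim: s => //= y s ->; case: (ltngtP x.+1 y) => _;
  by rewrite ?add0n ?addnA // [true + _]addnC.
apply/allP => x _; apply/eqP; case: x => [|x]; first by rewrite !count0.
by have := count_gt x; rewrite !(count_gtS x) count_gt => /addIn.
Qed.

Definition lattice_word (w : seq nat) : Prop :=
  forall n k, count_mem k.+1 (take n w) <= count_mem k (take n w).

Lemma lattice_word_take n w : lattice_word w -> lattice_word (take n w).
Proof.
move=> lat_w m k; case: (leqP m n) => [le_mn | /ltnW le_nm].
  by rewrite take_takel //; apply: lat_w.
by rewrite take_taker //; apply: lat_w.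
Qed.

Lemma lattice_word_catl w1 w2 : lattice_word (w1 ++ w2) -> lattice_word w1.
Proof. by move/(lattice_word_take (size w1)); rewrite take_size_cat. Qed.

Lemma lattice_word_count_le w a b :
  lattice_word w -> a <= b -> count_mem b w <= count_mem a w.
Proof.
move=> lat_w; elim: b => [|b IHb]; first by rewrite leqn0 => /eqP ->.
rewrite leq_eqVlt => /predU1P [-> // | lt_ab].
by apply: leq_trans (IHb lt_ab); have := lat_w (size w) b; rewrite take_size.
Qed.

Definition content (N : nat) (w : seq nat) : seq nat :=
  [seq count_mem k w | k <- iota 0 N].

Lemma content_rcons N w z :
  z < N -> content N (rcons w z) = incr_nth (content N w) z.
Proof.
move=> lt_zN; apply: (@eq_from_nth _ 0) => [|i].
  by rewrite size_incr_nth !size_map size_iota lt_zN.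
rewrite size_map size_iota => lt_iN.
rewrite nth_incr_nth !(nth_map 0) ?size_iota // nth_iota //.
by rewrite -cats1 count_cat /= addn0 addnC.
Qed.

(* Every letter [z <= y] has at least [r] occurrences in [w], so the k-th letter
   of the row [s] has at least [r + k] earlier occurrences and raises the excess
   as soon as [t <= r + k]. *)
Lemma excess_content_cat_row N t w s y r :
  lattice_word (w ++ s) -> all (fun x => x < N) s -> path geq y s ->
  r <= count_mem y w ->
  excess (content N w) t + (r + size s - t) <= excess (content N (w ++ s)) t + (r - t).
Proof.
elim: s w y r => [|z s IHs] w y r lat /= ; first by rewrite cats0 addn0.
move=> /andP [lt_zN lt_sN] /andP [le_zy path_s] le_r.
have le_rz : r <= count_mem z w.
  exact: leq_trans le_r (lattice_word_count_le (lattice_word_catl lat) le_zy).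
have := IHs (rcons w z) z r.+1; rewrite cat_rcons => /(_ lat lt_sN path_s).
rewrite -cats1 count_cat /= eqxx addn1 ltnS => /(_ le_rz).
rewrite cats1 content_rcons // excess_incr_nth ?size_map ?size_iota //.
rewrite (nth_map 0) ?size_iota // nth_iota // add0n.
have [le_tr | lt_rt] := leqP t r; first by rewrite (leq_trans le_tr le_rz); lia.
by case: (t <= _); lia.
Qed.

Lemma excess_content_rows N t rows :
  lattice_word (flatten rows) -> all (fun x => x < N) (flatten rows) ->
  all (sorted geq) rows ->
  excess (map size rows) t <= excess (content N (flatten rows)) t.
Proof.
elim/last_ind: rows => [//|rows s IHrows].
rewrite flatten_rcons all_rcons map_rcons excess_rcons all_cat.
move=> lat /andP [lt_rowsN lt_sN] /andP [sorted_s sorted_rows].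
have path_s : path geq (head 0 s) s.
  by case: s {lat lt_sN} sorted_s => //= x s ->; rewrite leqnn.
have := excess_content_cat_row t lat lt_sN path_s (leq0n _).
have := IHrows (lattice_word_catl lat) lt_rowsN sorted_rows.
lia.
Qed.

Lemma sorted_map_iota (f : nat -> nat) m n :
  (forall j, m <= j -> j.+1 < m + n -> f j <= f j.+1) ->
  sorted leq [seq f j | j <- iota m n].
Proof.
rewrite sorted_map; elim: n m => [|[|n] IHn] m f_le //=.
rewrite -/(relpre f leq m m.+1) {1}/relpre f_le ?addnS ?ltnS ?leq_addr //=.
by apply: (IHn m.+1) => j le_mj lt_j; apply: f_le; lia.
Qed.

Definition row_lengths (lam mu : seq nat) : seq nat :=
  [seq nth 0 lam i - nth 0 mu i | i <- iota 0 (size lam)].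

Lemma LR_tableau_excess lam mu nu T t :
  LR_tableau lam mu nu T -> excess (row_lengths lam mu) t <= excess nu t.
Proof.
case=> row_le [_ [content_T lat]].
set rows := [seq [seq T i j | j <- rev (iota (nth 0 mu i) (nth 0 lam i - nth 0 mu i))]
            | i <- iota 0 (size lam)].
have reading_rows : reading_word lam mu T = flatten rows by [].
rewrite reading_rows in content_T lat.
have -> : row_lengths lam mu = map size rows.
  by rewrite -map_comp; apply: eq_map => i /=; rewrite size_map size_rev size_iota.
have -> : excess nu t = excess (content (size nu) (flatten rows)) t.
  by rewrite /content (eq_map content_T) -/(mkseq _ _) mkseq_nth.
apply: excess_content_rows => //.
  apply/allP => x x_in; rewrite ltnNge; apply: contraL x_in => le_nu_x.
  by apply/count_memPn; rewrite content_T nth_default.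
apply/allP => _ /mapP [i _ ->]; rewrite map_rev rev_sorted.
by apply: sorted_map_iota => j le_j lt_j; apply: row_le; apply/andP; lia.
Qed.

Definition ribbon_end (a : seq nat) (i : nat) : nat := sumn (map predn (drop i a)).

Lemma size_ribbon_outer a : size (ribbon_outer a) = size a.
Proof. by rewrite size_map size_iota. Qed.

Lemma nth_ribbon_outer a i :
  nth 0 (ribbon_outer a) i = if i < size a then (ribbon_end a i).+1 else 0.
Proof.
case: ltnP => [lt_ia | le_ai]; first by rewrite (nth_map 0) ?size_iota // nth_iota.
by rewrite nth_default // size_ribbon_outer.
Qed.

Lemma nth_ribbon_inner a i :
  i < size a -> nth 0 (ribbon_inner a) i = ribbon_end a i.+1.
Proof. by move=> lt_ia; rewrite (nth_map 0) ?size_iota // nth_iota. Qed.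

Lemma nth_ribbon_outerE a i : is_composition a -> i < size a ->
  nth 0 (ribbon_outer a) i = nth 0 (ribbon_inner a) i + nth 0 a i.
Proof.
move=> comp_a lt_ia; rewrite nth_ribbon_outer lt_ia nth_ribbon_inner //.
have pos_ai : 0 < nth 0 a i := allP comp_a _ (mem_nth 0 lt_ia).
by rewrite /ribbon_end (drop_nth 0 lt_ia) /=; lia.
Qed.

Lemma row_lengths_ribbon a :
  is_composition a -> row_lengths (ribbon_outer a) (ribbon_inner a) = a.
Proof.
move=> comp_a; rewrite /row_lengths size_ribbon_outer -[RHS](mkseq_nth 0) /mkseq.
apply/eq_in_map => i; rewrite mem_iota => /andP [_ lt_ia].
by rewrite nth_ribbon_outerE // addKn.
Qed.

Lemma ribbon_support_excess a nu t :
  is_composition a -> ribbon_support a nu -> excess a t <= excess nu t.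
Proof.
move=> comp_a [_ [T LR_T]].
by rewrite -{1}(row_lengths_ribbon comp_a); apply: LR_tableau_excess LR_T.
Qed.

Lemma mem_leq_sumn s x : x \in s -> x <= sumn s.
Proof. by move=> x_in; rewrite (perm_sumn (perm_to_rem x_in)) leq_addr. Qed.

Definition prior_counts (w : seq nat) : seq nat :=
  [seq count_mem (nth 0 w p) (take p w) | p <- iota 0 (size w)].

Lemma prior_counts_rcons w c :
  prior_counts (rcons w c) = rcons (prior_counts w) (count_mem c w).
Proof.
rewrite /prior_counts size_rcons -addn1 iotaD map_cat /= add0n nth_rcons ltnn eqxx.
rewrite -cats1 take_size_cat // cats1; congr rcons.
apply/eq_in_map => p; rewrite mem_iota => /andP [_ lt_pw].
by rewrite nth_cat lt_pw takel_cat // ltnW.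
Qed.

Lemma take_prior_counts n w : take n (prior_counts w) = prior_counts (take n w).
Proof.
rewrite /prior_counts -map_take take_iota size_take_min.
apply/eq_in_map => p; rewrite mem_iota => /andP [_ lt_p].
by rewrite nth_take ?take_takel //; lia.
Qed.

Lemma prior_counts_cat_uniq w u : uniq u ->
  prior_counts (w ++ u) = prior_counts w ++ [seq count_mem c w | c <- u].
Proof.
elim/last_ind: u => [|u c IHu]; first by rewrite !cats0.
rewrite rcons_uniq => /andP [c_notin_u uniq_u].
rewrite -rcons_cat prior_counts_rcons IHu // map_rcons rcons_cat count_cat.
by rewrite (count_memPn c_notin_u) addn0.
Qed.

Lemma count_prior_counts N x w : all (fun c => c < N) w ->
  count_mem x (prior_counts w) = count (fun d => x < count_mem d w) (iota 0 N).
Proof.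
elim/last_ind: w => [|w c IHw]; first by rewrite /= (@eq_count _ _ pred0) ?count_pred0.
rewrite all_rcons => /andP [lt_cN lt_wN].
have c_in : c \in iota 0 N by rewrite mem_iota.
rewrite prior_counts_rcons -cats1 count_cat IHw //= addn0.
rewrite !(permP (perm_to_rem c_in)) /= -cats1 count_cat /= eqxx addn0.
have -> : count (fun d => x < count_mem d (w ++ [:: c])) (rem c (iota 0 N))
          = count (fun d => x < count_mem d w) (rem c (iota 0 N)).
  apply: eq_in_count => d; rewrite mem_rem_uniq ?iota_uniq // => /andP [ne_dc _].
  by rewrite count_cat /= eq_sym (negbTE ne_dc) !addn0.
by rewrite addn1 ltnS addnAC; case: (ltngtP x (count_mem c w)).
Qed.

Lemma lattice_word_prior_counts w : lattice_word (prior_counts w).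
Proof.
move=> n k; rewrite take_prior_counts.
have lt_letters : all (fun c => c < (sumn w).+1) (take n w).
  by apply/allP => c /mem_take c_in; rewrite ltnS mem_leq_sumn.
rewrite !(count_prior_counts _ lt_letters); apply: sub_count => d; exact: ltnW.
Qed.

Lemma ltn_count_sorted s x c : sorted geq s -> 0 < c ->
  (x < count (fun y => c <= y) s) = (c <= nth 0 s x).
Proof.
elim: s x => [|y s IHs] x sorted_ys pos_c /=.
  by rewrite nth_nil ltn0 leqn0 eqn0Ngt pos_c.
have le_s_y : all (fun z => z <= y) s.
  by apply: order_path_min sorted_ys => a b d le_ba le_db; apply: leq_trans le_db le_ba.
have [le_cy | lt_yc] := leqP c y.
  by case: x => [|x] //=; rewrite add1n ltnS IHs // (path_sorted sorted_ys).
have le_nth_y : nth 0 (y :: s) x <= y.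
  case: x => [|x] //=; have [lt_xs | le_sx] := ltnP x (size s).
    exact: (allP le_s_y) _ (mem_nth 0 lt_xs).
  by rewrite nth_default.
rewrite (eq_in_count (a2 := pred0)) ?count_pred0 => [|z /(allP le_s_y) le_zy].
  by apply/esym/negbTE; rewrite -ltnNge (leq_ltn_trans le_nth_y).
by apply/negbTE; rewrite -ltnNge (leq_ltn_trans le_zy).
Qed.

Definition iota_word (a : seq nat) : seq nat := flatten [seq iota 1 x | x <- a].

Lemma count_iota_word a c : count_mem c (iota_word a) = count (fun x => 0 < c <= x) a.
Proof.
rewrite count_flatten -map_comp -sumn_count; congr sumn; apply: eq_map => x /=.
by rewrite count_uniq_mem ?iota_uniq // mem_iota add1n ltnS.
Qed.

Lemma prior_counts_iota_word a :
  prior_counts (iota_word a) =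
  flatten [seq [seq count (fun x => c <= x) (take i a) | c <- iota 1 (nth 0 a i)]
          | i <- iota 0 (size a)].
Proof.
elim/last_ind: a => [//|a x IHa].
rewrite /iota_word map_rcons flatten_rcons prior_counts_cat_uniq ?iota_uniq //.
rewrite -/(iota_word a) IHa size_rcons -[(size a).+1]addn1 iotaD map_cat flatten_cat.
rewrite /= cats0
 add0n nth_rcons ltnn eqxx -cats1 take_size_cat //; congr (_ ++ _).
  congr flatten; apply/eq_in_map => i; rewrite mem_iota => /andP [_ lt_ia].
  by rewrite nth_cat lt_ia takel_cat // ltnW.
apply/eq_in_map => c; rewrite mem_iota => /andP [pos_c _].
by rewrite count_iota_word; apply: eq_count => y; rewrite pos_c.
Qed.

Lemma count_prior_counts_iota_word a x :
  count_mem x (prior_counts (iota_word a)) = nth 0 (sort geq a) x.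
Proof.
set nu := sort geq a.
have perm_nu : perm_eq nu a by rewrite perm_sort.
have sorted_nu : sorted geq nu by apply: sort_sorted => m n; apply: leq_total.
have le_nu_x : nth 0 nu x <= sumn a.
  rewrite -(perm_sumn perm_nu); have [lt_x | le_x] := ltnP x (size nu).
    by rewrite mem_leq_sumn ?mem_nth.
  by rewrite nth_default.
have lt_letters : all (fun c => c < (sumn a).+1) (iota_word a).
  apply/allP => c /flattenP [_ /mapP [y y_in ->]].
  rewrite mem_iota add1n ltnS => /andP [_ le_cy].
  by rewrite ltnS (leq_trans le_cy) ?mem_leq_sumn.
rewrite (count_prior_counts _ lt_letters) /= count_iota_word.
rewrite (@eq_count _ _ pred0) ?count_pred0 //.
rewrite (@eq_in_count _ _ (fun d => d < 1 + nth 0 nu x)) => [|d]; last first.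
  rewrite mem_iota => /andP [pos_d _]; rewrite count_iota_word add1n ltnS.
  rewrite -(ltn_count_sorted _ sorted_nu pos_d) (permP perm_nu).
  by rewrite (@eq_count _ _ (fun y => d <= y)) // => y; rewrite pos_d.
by rewrite -size_filter filter_iota_ltn ?size_iota.
Qed.

(* The cell of row i at distance c >= 1 from the right end of its row receives
   the number of rows above row i of length at least c. *)
Definition ribbon_filling (a : seq nat) (i j : nat) : nat :=
  count (fun x => nth 0 (ribbon_outer a) i - j <= x) (take i a).

Lemma map_subn_rev_iota m n : [seq m + n - j | j <- rev (iota m n)] = iota 1 n.
Proof.
apply: (@eq_from_nth _ 0) => [|i]; rewrite size_map size_rev !size_iota // => lt_in.
by rewrite (nth_map 0) ?size_rev ?size_iota // nth_rev ?size_iota // !nth_iota; lia.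
Qed.

Lemma reading_word_ribbon_filling a : is_composition a ->
  reading_word (ribbon_outer a) (ribbon_inner a) (ribbon_filling a) =
  prior_counts (iota_word a).
Proof.
move=> comp_a; rewrite prior_counts_iota_word /reading_word size_ribbon_outer.
congr flatten; apply/eq_in_map => i; rewrite mem_iota => /andP [_ lt_ia].
have outer_i := nth_ribbon_outerE comp_a lt_ia.
rewrite outer_i addKn -(map_subn_rev_iota (nth 0 (ribbon_inner a) i)) -map_comp.
by apply: eq_map => j; rewrite /ribbon_filling outer_i.
Qed.

Lemma ribbon_support_sort a : is_composition a -> ribbon_support a (sort geq a).
Proof.
move=> comp_a; split.
  split; first by rewrite (perm_all _ (permEl (perm_sort geq a))).
  by apply: sort_sorted => m n; apply: leq_total.
exists (ribbon_filling a); split; [|split; [|split]].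
- by move=> i j _ _; apply: sub_count => x /=; apply: leq_trans; rewrite leq_sub2l.
- (* The only cell above another one in a ribbon is the leftmost cell of row i,
     above the rightmost cell of row i+1, which is filled with i+1. *)
  move=> i j /andP [le_inner_j _] /andP [_ lt_j_outer].
  have lt_i1 : i.+1 < size a by move: lt_j_outer; rewrite nth_ribbon_outer; case: ifP.
  have lt_ia : i < size a := ltnW lt_i1.
  rewrite /ribbon_filling (_ : nth 0 (ribbon_outer a) i.+1 - j = 1); last first.
    move: le_inner_j lt_j_outer; rewrite nth_ribbon_inner // nth_ribbon_outer lt_i1; lia.
  rewrite [count _ (take i.+1 a)](eq_in_count (a2 := predT)) ?count_predT ?size_takel //;
    last by move=> x /mem_take /(allP comp_a).
  by rewrite ltnS (leq_trans (count_size _ _)) // size_take_min geq_minl.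
- by move=> k; rewrite reading_word_ribbon_filling // count_prior_counts_iota_word.
- by rewrite reading_word_ribbon_filling //; apply: lattice_word_prior_counts.
Qed.

Theorem proposition2p3 (alpha beta : seq nat) :
  is_composition alpha -> is_composition beta ->
  (forall nu, ribbon_support alpha nu <-> ribbon_support beta nu) ->
  perm_eq alpha beta.
Proof.
move=> comp_alpha comp_beta same_support; apply: (excess_inj comp_alpha comp_beta) => t.
have le_ab : excess alpha t <= excess beta t.
  rewrite -(excess_sort geq beta); apply: ribbon_support_excess comp_alpha _.
  by apply/same_support/ribbon_support_sort.
have le_ba : excess beta t <= excess alpha t.
  rewrite -(excess_sort geq alpha); apply: ribbon_support_excess comp_beta _.
  by apply/same_support/ribbon_support_sort.
by apply/eqP; rewrite eqn_leq le_ab le_ba.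
Qed.
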